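(* Let $G$ be a graph with $n\geq 1$ vertices and minimum degree $\delta$, and let $t\geq 1$ be an integer with $2\delta-n\geq t-2$. Then $G$ contains every 2-degenerate graph on $t$ vertices as a subgraph.
   Context: All graphs are finite and simple. A graph is 2-degenerate if every non-empty subgraph of it has a vertex of degree at most 2. *)

From mathcomp Require Import all_boot all_order all_algebra.
Set Implicit Arguments. Unset Strict Implicit. Unset Printing Implicit Defensive.

Definition simple_graph (V : finType) (e : rel V) : Prop :=
  symmetric e /\ irreflexive e.

Definition nbhd (V : finType) (e : rel V) (v : V) : {set V} := [set u | e v u].
Definition deg (V : finType) (e : rel V) (v : V) : nat := #|nbhd e v|.

Definition is_min_degree (V : finType) (e : rel V) (delta : nat) : Prop :=
  (forall v : V, delta <= deg e v) /\ (exists v : V, deg e v = delta).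

Definition two_degenerate (W : finType) (f : rel W) : Prop :=
  forall S : {set W}, S != set0 ->
    exists2 x, x \in S & #|[set y in S | f x y]| <= 2.

Definition contains_subgraph (V W : finType) (e : rel V) (f : rel W) : Prop :=
  exists g : W -> V, injective g /\ forall x y, f x y -> e (g x) (g y).

(* Embed the 2-degenerate graph greedily, one vertex at a time, in the reverse
   of a degeneracy order: each new vertex has at most two already embedded
   neighbours, so its image must be a common neighbour, outside the current
   image, of at most two vertices.  Two neighbourhoods of size at least delta
   meet in at least 2 delta - n >= t - 2 vertices, while fewer than t - 2 of
   those can already be used, since the two vertices themselves are not among
   their common neighbours. *)

From mathcomp Require Import all_boot all_order all_algebra.
From mathcomp Require Import zify.
Local Open Scope ring_scope.

Lemma card_bigcup_leq (T I : finType) (P : {pred I}) (F : I -> {set T}) :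
  (#|\bigcup_(i in P) F i| <= \sum_(i in P) #|F i|)%N.
Proof.
elim/big_rec2: _ => [|i n U _ leUn]; first by rewrite cards0.
by rewrite (leq_trans (leq_card_setU _ _).1) ?leq_add2l.
Qed.

Section CommonNeighbourhood.

Variables (V : finType) (e : rel V).

Definition common_nbhd (A : {set V}) : {set V} := \bigcap_(a in A) nbhd e a.

Lemma deg_lt_card (v : V) : irreflexive e -> (deg e v < #|V|)%N.
Proof.
move=> eirr; rewrite /deg -cardsT proper_card //.
by apply/properP; split; [exact: subsetT | exists v; rewrite !inE ?eirr].
Qed.

(* Bonferroni: the complement of the common neighbourhood is covered by the
   complements of the single neighbourhoods. *)
Lemma card_common_nbhd (A : {set V}) :
  (#|V| + \sum_(a in A) deg e a <= #|common_nbhd A| + #|A| * #|V|)%N.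
Proof.
have cover_compl : (#|~: common_nbhd A| <= \sum_(a in A) #|~: nbhd e a|)%N.
  by rewrite setC_bigcap card_bigcup_leq.
have sum_deg_compl :
    (\sum_(a in A) deg e a + \sum_(a in A) #|~: nbhd e a| = #|A| * #|V|)%N.
  by rewrite -big_split -sum_nat_const; apply: eq_bigr => a _; apply: cardsC.
have := cardsC (common_nbhd A); lia.
Qed.

Lemma common_nbhd_subD (A U : {set V}) : irreflexive e ->
  common_nbhd A :&: U \subset U :\: A.
Proof.
move=> eirr; apply/subsetP => v; rewrite !inE => /andP [/bigcapP vA ->].
by rewrite andbT; apply/negP => /vA; rewrite inE eirr.
Qed.

Lemma exists_common_nbhd_notin (delta : nat) (A U : {set V}) :
  irreflexive e -> (forall v, delta <= deg e v)%N -> (delta < #|V|)%N ->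
  A \subset U -> (#|A| <= 2)%N -> (#|U| + #|V| <= 2 * delta + 1)%N ->
  exists2 v, v \notin U & {in A, forall a, e a v}.
Proof.
move=> eirr mindeg delta_lt sAU cardA cardUV.
have sum_deg : (#|A| * delta <= \sum_(a in A) deg e a)%N.
  by rewrite -sum_nat_const leq_sum.
have used : (#|common_nbhd A :&: U| + #|A| <= #|U|)%N.
  have := subset_leq_card (common_nbhd_subD A U eirr).
  by rewrite cardsD (setIidPr sAU) => le; have := subset_leq_card sAU; lia.
have free : (0 < #|common_nbhd A :\: U|)%N.
  have := card_common_nbhd A; have := cardsID U (common_nbhd A).
  by case: #|A| cardA sum_deg used => [|[|[|]]] //; lia.
case/card_gt0P: free => v; rewrite inE => /andP [vU /bigcapP vA].
by exists v => // a /vA; rewrite inE.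
Qed.

End CommonNeighbourhood.

Section GreedyEmbedding.

Variables (V W : finType) (e : rel V) (f : rel W).
Hypotheses (esym : symmetric e) (fsym : symmetric f) (firr : irreflexive f).

Definition embeds_on (S : {set W}) (g : W -> V) : Prop :=
  {in S &, injective g} /\ {in S &, forall x y, f x y -> e (g x) (g y)}.

Lemma embeds_on_setU1 (S : {set W}) (x : W) (g : W -> V) (v : V) :
  x \in S -> embeds_on (S :\ x) g -> v \notin g @: (S :\ x) ->
  {in [set y in S | f x y], forall y, e (g y) v} ->
  embeds_on S (fun z => if z == x then v else g z).
Proof.
move=> xS [ginj gedge] vU vA.
have inD z : z \in S -> z != x -> z \in S :\ x by rewrite !inE => -> ->.
split=> [z1 z2 z1S z2S | x1 x2 x1S x2S] /=.
  case: eqP => [-> | /eqP z1x]; case: eqP => [-> | /eqP z2x] // gz.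
  - by move: vU; rewrite gz imset_f ?inD.
  - by move: vU; rewrite -gz imset_f ?inD.
  - exact: ginj (inD _ z1S z1x) (inD _ z2S z2x) gz.
case: eqP => [-> | /eqP x1x]; case: eqP => [-> | /eqP x2x]; first by rewrite firr.
- by move=> fx; rewrite esym vA // inE x2S.
- by move=> fx; rewrite vA // inE x1S fsym.
- exact: gedge (inD _ x1S x1x) (inD _ x2S x2x).
Qed.

Hypothesis fdeg : two_degenerate f.
Hypothesis extend : forall A U : {set V},
  A \subset U -> (#|A| <= 2)%N -> (#|U| < #|W|)%N ->
  exists2 v, v \notin U & {in A, forall a, e a v}.

Lemma exists_embeds_on (v0 : V) (S : {set W}) : exists g, embeds_on S g.
Proof.
move: {2}#|S| (erefl #|S|) => n; elim: n S => [|n IHn] S cardS.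
  by exists (fun=> v0); rewrite (cards0_eq cardS); split=> x; rewrite inE.
have [x xS few_nbrs] : exists2 x, x \in S & (#|[set y in S | f x y]| <= 2)%N.
  by apply: fdeg; apply/set0Pn; apply/card_gt0P; rewrite cardS.
have [g gS] : exists g, embeds_on (S :\ x) g.
  by apply: IHn; move: cardS; rewrite (cardsD1 x S) xS => -[].
have sNU : g @: [set y in S | f x y] \subset g @: (S :\ x).
  apply/imsetS/subsetP => y; rewrite !inE => /andP [-> fxy].
  by rewrite andbT; apply: contraTneq fxy => ->; rewrite firr.
have [||v vU vN] := extend _ _ sNU.
- exact: leq_trans (leq_imset_card _ _) few_nbrs.
- apply: leq_ltn_trans (leq_imset_card _ _) _.
  by have := max_card S; rewrite (cardsD1 x S) xS; lia.
exists (fun z => if z == x then v else g z).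
by apply: embeds_on_setU1 => // y yN; apply: vN; apply: imset_f.
Qed.

Lemma contains_two_degenerate (v0 : V) : contains_subgraph e f.
Proof.
have [g [ginj gedge]] := exists_embeds_on v0 [set: W].
by exists g; split=> [x y | x y]; [apply: ginj | apply: gedge]; rewrite inE.
Qed.

End GreedyEmbedding.

Theorem lemma10 (V : finType) (e : rel V) (delta t : nat) :
  simple_graph e -> (1 <= #|V|)%N -> is_min_degree e delta -> (1 <= t)%N ->
  (2 * (delta%:Z) - (#|V|)%:Z >= (t%:Z) - 2) ->
  forall (W : finType) (f : rel W),
    simple_graph f -> #|W| = t -> two_degenerate f ->
    contains_subgraph e f.
Proof.
move=> [esym eirr] _ [mindeg [v0 deg_v0]] _ bound W f [fsym firr] cardW fdeg.
have delta_lt : (delta < #|V|)%N by rewrite -deg_v0 deg_lt_card.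
have extend (A U : {set V}) : A \subset U -> (#|A| <= 2)%N -> (#|U| < #|W|)%N ->
    exists2 v, v \notin U & {in A, forall a, e a v}.
  move=> sAU cardA cardU.
  apply: exists_common_nbhd_notin eirr mindeg delta_lt sAU cardA _.
  by move: bound cardU; rewrite cardW; lia.
exact: contains_two_degenerate esym fsym firr fdeg extend v0.
Qed.
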